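(* For the uniform noising process on $[S]^d$ started from any $q_0$, and for every $i\in[d]$, $c\in[S]$, the function $\varphi_{i,c}(t)=\mathbb E_{x\sim q_t}[-\log s_t(x\oplus_ic,x)]$ is differentiable on $(0,\infty)$ and satisfies $$-\varphi_{i,c}'(t)\ge\varphi_{i,c}(t)\qquad\text{for all }t>0.$$ Consequently $\varphi(t)=\frac1S\sum_{i,c}\varphi_{i,c}(t)$ satisfies $-\varphi'(t)\ge\varphi(t)\ge0$, and $\varphi$ is non-increasing on $(0,\infty)$.
   Context: Uniform noising process: time-homogeneous CTMC on $[S]^d$ with rate $1/S$ between states at Hamming distance one and $0$ between states at Hamming distance $\ge2$; $q_t$ its time-$t$ law; $s_t(y,x)=q_t(y)/q_t(x)$. $x\oplus_i c$: $x$ with coordinate $i$ replaced by $(x^i+c)\bmod S$, convention $0\bmod S=S$. *)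

From HB Require Import structures.
From mathcomp Require Import all_boot all_order all_algebra.
From mathcomp Require Import all_classical all_reals all_analysis.
Set Implicit Arguments. Unset Strict Implicit. Unset Printing Implicit Defensive.
Import Order.TTheory GRing.Theory Num.Theory.
Local Open Scope ring_scope.

(* State space [S]^d.  A coordinate value v in {1,..,S} is represented by the
   ordinal v-1 : 'I_S. *)
Definition state (S d : nat) := {ffun 'I_d -> 'I_S}.

Lemma ord_pos (S : nat) (j : 'I_S) : (0 < S)%N.
Proof. exact: leq_ltn_trans (leq0n j) (ltn_ord j). Qed.

(* (v + c) mod S with convention 0 mod S = S, in the 0-based representation:
   if j = v-1 then the result (minus 1) is (j + c) %% S. *)
Definition shiftS (S c : nat) (j : 'I_S) : 'I_S :=
  Ordinal (ltn_pmod (j + c) (ord_pos j)).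

Definition oplus (S d : nat) (x : state S d) (i : 'I_d) (c : nat) : state S d :=
  [ffun k => if k == i then shiftS c (x k) else x k].

Definition hamming (S d : nat) (x y : state S d) : nat := #|[set k | x k != y k]|.

Definition urate (R : realType) (S d : nat) (x y : state S d) : R :=
  if hamming x y == 1%N then (S%:R)^-1 else 0.

Definition ugen (R : realType) (S d : nat) (x y : state S d) : R :=
  if x == y then - \sum_(z : state S d | z != x) urate R x z else urate R x y.

Definition genact (R : realType) (S d : nat) (p : state S d -> R) : state S d -> R :=
  fun y => \sum_(x : state S d) p x * ugen R x y.

(* time-t law q_t = q_0 e^{tQ}, via the exponential series, entrywise *)
Definition qt (R : realType) (S d : nat) (q0 : state S d -> R) (t : R)
  (x : state S d) : R :=
  limn (fun N : nat =>
    \sum_(0 <= n < N) (t ^+ n / (n`!)%:R * iter n (@genact R S d) q0 x)).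

Definition score (R : realType) (S d : nat) (q0 : state S d -> R) (t : R)
  (y x : state S d) : R := qt q0 t y / qt q0 t x.

Definition phi_ic (R : realType) (S d : nat) (q0 : state S d -> R)
  (i : 'I_d) (c : nat) (t : R) : R :=
  \sum_(x : state S d) qt q0 t x * (- ln (score q0 t (oplus x i c) x)).

Definition phi (R : realType) (S d : nat) (q0 : state S d -> R) (t : R) : R :=
  (S%:R)^-1 * \sum_(i < d) \sum_(1 <= c < S.+1) phi_ic q0 i c t.

From HB Require Import structures.
From mathcomp Require Import all_boot all_order all_algebra.
From mathcomp Require Import all_classical all_reals all_analysis.
From mathcomp Require Import ring lra.
Import Order.TTheory GRing.Theory Num.Theory.
Import numFieldNormedType.Exports.
Local Open Scope ring_scope.
Set Implicit Arguments. Unset Strict Implicit. Unset Printing Implicit Defensive.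

(* The generator of the uniform noising process acts on row vectors as
   [Q p = \sum_j (A_j p - p)], where [A_j] averages [p] over the j-th coordinate.
   Hence [Q = M - d] with [M = \sum_j A_j] a nonnegative operator whose d-th
   power charges every state, so [q_t = e^{-dt} q_0 e^{tM}] is positive for
   [t > 0]; the identity follows from uniqueness for [u' = u Q], which holds
   because [Q] is dissipative.  Hence [phi_{i,c}] is differentiable, and
   [-phi_{i,c}'] splits into one term per coordinate [j]: the term [j = i]
   dominates [phi_{i,c}] and the terms [j <> i] are nonnegative.  Both facts
   reduce pointwise to [ln u <= u - 1] and [-ln u <= 1/u - 1], once the sums
   [\sum_x w x (p x - A_j p x)] are discarded: they vanish for every weight [w]
   that is constant along the j-th coordinate, e.g. [ln (A_j p / A_j r)]. *)

Section CoordinateAverage.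
Variables (R : realType) (S d : nat).
Hypothesis S_gt0 : (0 < S)%N.
Local Notation state := (state S d).

Definition upd (x : state) (j : 'I_d) (a : 'I_S) : state :=
  [ffun k => if k == j then a else x k].

Definition agree_off (j : 'I_d) (x y : state) : bool :=
  [forall k, (k != j) ==> (x k == y k)].

Lemma agree_offE j x z a : (agree_off j x z && (z j == a)) = (z == upd x j a).
Proof.
apply/andP/eqP => [[/forallP H /eqP za]|->].
  apply/ffunP => k; rewrite ffunE; case: eqP => [->//|/eqP kj].
  by move/implyP: (H k) => /(_ kj)/eqP.
split; last by rewrite ffunE eqxx.
by apply/forallP => k; rewrite ffunE; apply/implyP => /negbTE ->.
Qed.

Lemma agree_offC j x y : agree_off j x y = agree_off j y x.
Proof.
by apply/forallP/forallP => H k; case: (k != j) (H k) => //= /eqP ->.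
Qed.

Lemma agree_offxx j x : agree_off j x x.
Proof. by apply/forallP => k; rewrite eqxx implybT. Qed.

Lemma sum_agree_off (F : state -> R) x j :
  \sum_(z | agree_off j x z) F z = \sum_(a : 'I_S) F (upd x j a).
Proof.
rewrite (partition_big (fun z : state => z j) xpredT) //=.
apply: eq_bigr => a _; rewrite (big_pred1 (upd x j a)) // => z.
by rewrite /= agree_offE.
Qed.

Lemma Sr_neq0 : (S%:R : R) != 0.
Proof. by rewrite pnatr_eq0 -lt0n. Qed.

Lemma sum_upd (F : state -> R) j :
  \sum_(a : 'I_S) \sum_(x : state) F (upd x j a) = S%:R * \sum_x F x.
Proof.
rewrite exchange_big /=.
under eq_bigr => x _ do rewrite -sum_agree_off.
rewrite (exchange_big_dep xpredT) //= mulr_sumr; apply: eq_bigr => z _.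
under eq_bigl => x do rewrite agree_offC.
by rewrite sum_agree_off sumr_const card_ord mulr_natl.
Qed.

Definition cavg (j : 'I_d) (p : state -> R) (y : state) : R :=
  S%:R^-1 * \sum_(a : 'I_S) p (upd y j a).

Lemma upd_upd x j a b : upd (upd x j a) j b = upd x j b.
Proof. by apply/ffunP => k; rewrite !ffunE; case: eqP. Qed.

Lemma cavg_upd j p x a : cavg j p (upd x j a) = cavg j p x.
Proof. by rewrite /cavg; under eq_bigr do rewrite upd_upd. Qed.

Lemma sum_mul_cavg (w p : state -> R) j : (forall x a, w (upd x j a) = w x) ->
  \sum_x w x * cavg j p x = \sum_x w x * p x.
Proof.
move=> w_upd.
under eq_bigr => x _ do rewrite /cavg mulrCA mulr_sumr.
rewrite -mulr_sumr exchange_big /=.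
under eq_bigr => a _ do under eq_bigr => x _ do rewrite -(w_upd x a).
by rewrite (sum_upd (fun x => w x * p x)) mulrA mulVf ?mul1r ?Sr_neq0.
Qed.

Lemma sum_mul_sub_cavg (w p : state -> R) j : (forall x a, w (upd x j a) = w x) ->
  \sum_x w x * (p x - cavg j p x) = 0.
Proof.
by move=> w_upd; under eq_bigr do rewrite mulrBr; rewrite sumrB sum_mul_cavg ?subrr.
Qed.

Lemma sum_mul_sub_cavg_le0 (u : state -> R) j : \sum_y u y * (cavg j u y - u y) <= 0.
Proof.
have -> : \sum_y u y * (cavg j u y - u y) = - \sum_y (u y - cavg j u y) ^+ 2.
  transitivity (\sum_y u y * (cavg j u y - u y) +
                \sum_y cavg j u y * (u y - cavg j u y)).
    by rewrite sum_mul_sub_cavg ?addr0 //; apply: cavg_upd.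
  by rewrite -big_split -sumrN; apply: eq_bigr => y _ /=; ring.
by rewrite oppr_le0 sumr_ge0 // => y _; rewrite sqr_ge0.
Qed.

Lemma sum_cavg (p : state -> R) j : \sum_x cavg j p x = \sum_x p x.
Proof.
have := @sum_mul_cavg (fun=> 1) p j (fun _ _ => erefl).
by under eq_bigr do rewrite mul1r; under [in RHS]eq_bigr do rewrite mul1r.
Qed.

Lemma cavg_gt0 j (p : state -> R) x :
  (forall z, 0 < p z) -> 0 < cavg j p x.
Proof.
move=> p_gt0; rewrite /cavg mulr_gt0 ?invr_gt0 ?ltr0n //.
rewrite (bigD1 (Ordinal S_gt0)) //=; apply: ltr_wpDr; last exact: p_gt0.
by apply: sumr_ge0 => a _; rewrite ltW.
Qed.

Lemma agree_off_diff j x y :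
  agree_off j x y = ([set k | x k != y k] \subset [set j]).
Proof.
apply/forallP/fintype.subsetP => [H k|H k]; rewrite ?inE.
  by apply: contraR => kj; move/implyP: (H k) => /(_ kj) ->.
by apply/implyP => kj; apply: contraR kj => xy; have := H k; rewrite !inE xy; apply.
Qed.

Lemma urateE x y :
  urate R x y = S%:R^-1 * \sum_j ((agree_off j x y && (x != y))%:R).
Proof.
rewrite /urate /hamming; set D := [set k | x k != y k].
have [exy|xy] := eqVneq x y.
  have -> : D = finset.set0 by apply/setP => k; rewrite !inE exy eqxx.
  by rewrite cards0 /= big1 ?mulr0 // => j _; rewrite andbF.
case: eqVneq => [/eqP/cards1P [j0 Dj0]|D1].
  rewrite (bigD1 j0) //= agree_off_diff -/D Dj0 fintype.subxx /= big1 ?addr0 ?mulr1 //.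
  by move=> j jj0; rewrite agree_off_diff -/D Dj0 finset.sub1set inE eq_sym (negbTE jj0).
rewrite big1 ?mulr0 // => j _; rewrite andbT agree_off_diff -/D.
have [/subset_leq_card|//] := boolP (D \subset [set j]); rewrite cards1.
have : D != finset.set0.
  apply: contraNneq xy => D0; apply/eqP/ffunP => k; apply/eqP.
  by have := finset.in_set0 k; rewrite -D0 inE => /negbFE.
by rewrite -card_gt0; move: D1; case: #|D| => [|[|]].
Qed.

Lemma ugenE x y :
  ugen R x y = \sum_(j < d) (S%:R^-1 * (agree_off j x y)%:R - (x == y)%:R).
Proof.
rewrite /ugen; case: eqVneq => [<-|xy]; last first.
  by rewrite urateE mulr_sumr; apply: eq_bigr => j _; rewrite xy andbT subr0.
under eq_bigr => z _ do rewrite urateE.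
rewrite -mulr_sumr exchange_big /= mulr_sumr -sumrN; apply: eq_bigr => j _.
have -> : \sum_(z | z != x) ((agree_off j x z && (x != z))%:R : R) = S%:R - 1.
  under eq_bigr => z zx do rewrite eq_sym zx andbT.
  have : \sum_z ((agree_off j x z)%:R : R) = S%:R.
    rewrite (bigID (agree_off j x)) /= [X in _ + X]big1 ?addr0;
      last by move=> z /negbTE ->.
    by under eq_bigr => z -> do []; rewrite sum_agree_off sumr_const card_ord.
  by rewrite (bigD1 x) //= agree_offxx /= => <-; rewrite addrAC subrr add0r.
by rewrite agree_offxx mulr1 mulrBr mulVf ?Sr_neq0 // mulr1 opprB.
Qed.

Lemma genactE (p : state -> R) y :
  genact p y = \sum_(j < d) (cavg j p y - p y).
Proof.
rewrite /genact.
under eq_bigr => x _ do rewrite ugenE mulr_sumr.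
rewrite exchange_big /=; apply: eq_bigr => j _.
under eq_bigr do rewrite mulrBr.
rewrite sumrB; congr (_ - _); last first.
  by rewrite (bigD1 y) //= eqxx mulr1 big1 ?addr0 // => x /negbTE ->; rewrite mulr0.
under eq_bigr => x _ do rewrite mulrCA.
rewrite -mulr_sumr /cavg; congr (_ * _).
rewrite (bigID (agree_off j y)) /= [X in _ + X]big1 ?addr0;
  last by move=> x; rewrite agree_offC => /negbTE ->; rewrite mulr0.
rewrite -sum_agree_off; apply: eq_bigr => x; rewrite agree_offC => ->.
exact: mulr1.
Qed.

Lemma sum_genact (p : state -> R) : \sum_y genact p y = 0.
Proof.
under eq_bigr do rewrite genactE.
by rewrite exchange_big big1 // => j _; rewrite sumrB sum_cavg subrr.
Qed.

End CoordinateAverage.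

Section ExponentialSeries.
Variable R : realType.

Definition expsum (a : nat -> R) (t : R) (N : nat) : R :=
  \sum_(0 <= n < N) (t ^+ n / (n`!)%:R * a n).

Definition expser (a : nat -> R) (t : R) : R := limn (expsum a t).

Definition geom_bounded (a : nat -> R) :=
  exists C L : R, 0 <= L /\ forall n, `|a n| <= C * L ^+ n.

Lemma geom_bounded_shift a : geom_bounded a -> geom_bounded (fun n => a n.+1).
Proof.
case=> C [L [L0 aCL]]; exists (C * L), L; split => // n.
by rewrite -mulrA -exprS.
Qed.

Lemma geom_boundedZ k a : geom_bounded a -> geom_bounded (fun n => k * a n).
Proof.
case=> C [L [L0 aCL]]; exists (`|k| * C), L; split => // n.
by rewrite normrM -mulrA ler_wpM2l.
Qed.

Lemma expsumE a t : expsum a t = pseries (fun n => a n / n`!%:R) t.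
Proof.
apply/funext => N; rewrite /expsum /pseries /series /=.
by apply: eq_bigr => n _; ring.
Qed.

(* Comparison with the exponential series of [L |t|]. *)
Lemma is_cvg_pseries_fact a t : geom_bounded a ->
  cvgn (pseries (fun n => a n / n`!%:R) t).
Proof.
case=> C [L [L0 aCL]]; apply: normed_cvg.
have Lt0 : 0 <= L * `|t| by rewrite mulr_ge0.
apply: (series_le_cvg (v_ := fun n => `|C| * exp_coeff (L * `|t|) n)).
- by move=> n /=.
- by move=> n; rewrite mulr_ge0 // exp_coeff_ge0.
- move=> n /=.
  have fact_norm : `|(n`!%:R : R)| = n`!%:R by rewrite ger0_norm.
  rewrite normrM normrM normfV normrX fact_norm /exp_coeff /= exprMn.
  have aCL' : `|a n| <= `|C| * L ^+ n.
    by apply: le_trans (aCL n) _; rewrite ler_wpM2r ?exprn_ge0 // ler_norm.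
  rewrite (_ : `|C| * _ = (`|C| * L ^+ n) * (n`!%:R)^-1 * `|t| ^+ n); last by ring.
  by rewrite ler_wpM2r ?exprn_ge0 // ler_wpM2r ?invr_ge0 ?ler0n.
- exact: is_cvg_seriesZ (is_cvg_series_exp_coeff (L * `|t|)).
Qed.

Lemma is_cvg_expsum a t : geom_bounded a -> cvgn (expsum a t).
Proof. by move=> ga; rewrite expsumE; apply: is_cvg_pseries_fact. Qed.

Lemma pseries_diffs_fact a :
  pseries_diffs (fun n => a n / n`!%:R) = (fun n => a n.+1 / n`!%:R :> R).
Proof.
apply/funext => n; rewrite /pseries_diffs factS natrM invfM.
by rewrite mulrCA [X in _ * X]mulrA mulfV ?pnatr_eq0 // mul1r.
Qed.

Lemma is_derive_expser a (t : R) : geom_bounded a ->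
  is_derive t (1 : R) (expser a) (expser (fun n => a n.+1) t).
Proof.
move=> ga.
have -> : expser a = fun x => limn (pseries (fun n => a n / n`!%:R) x).
  by apply/funext => x; rewrite /expser expsumE.
rewrite /expser expsumE -pseries_diffs_fact.
apply: (pseries_snd_diffs (K := `|t| + 1)); rewrite ?pseries_diffs_fact.
- exact: is_cvg_pseries_fact.
- exact: is_cvg_pseries_fact (geom_bounded_shift ga).
- exact: is_cvg_pseries_fact (geom_bounded_shift (geom_bounded_shift ga)).
- by rewrite [X in _ < X]ger0_norm ?ltrDl // addr_ge0.
Qed.

Lemma expser0 a : expser a 0 = a 0.
Proof.
apply: lim_near_cst => //; exists 1%N => // -[|N] //= _.
rewrite /expsum big_nat_recl //= expr0 divr1 mul1r big1 ?addr0 // => n _.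
by rewrite expr0n /= !mul0r.
Qed.

Lemma expser_sum (I : finType) (b : I -> nat -> R) t :
  (forall i, geom_bounded (b i)) ->
  expser (fun n => \sum_i b i n) t = \sum_i expser (b i) t.
Proof.
move=> gb; rewrite /expser.
have -> : expsum (fun n => \sum_i b i n) t = fun N => \sum_i expsum (b i) t N.
  apply/funext => N; rewrite /expsum.
  by under eq_bigr do rewrite mulr_sumr; rewrite exchange_big.
apply: cvg_lim => //; apply: cvg_big => // [|i _]; first exact: add_continuous.
exact: is_cvg_expsum.
Qed.

Lemma expserZ k b t : geom_bounded b -> expser (fun n => k * b n) t = k * expser b t.
Proof.
move=> gb; rewrite /expser.
have -> : expsum (fun n => k * b n) t = k *: expsum b t.
  apply/funext => N; rewrite fctE /expsum scaler_sumr; apply: eq_bigr => n _.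
  by rewrite /GRing.scale /= mulrCA.
by rewrite limZl_tmp //; apply: is_cvg_expsum.
Qed.

Lemma expser_gt0 (a : nat -> R) m t : geom_bounded a ->
  (forall n, 0 <= a n) -> 0 < a m -> 0 < t -> 0 < expser a t.
Proof.
move=> ga a_ge0 am_gt0 t_gt0.
have term_ge0 n : 0 <= t ^+ n / n`!%:R * a n.
  by rewrite mulr_ge0 // divr_ge0 // exprn_ge0 // ltW.
have nd : nondecreasing_seq (expsum a t).
  by apply/nondecreasing_seqP => n; rewrite /expsum big_nat_recr //= lerDl.
rewrite /expser; apply: lt_le_trans (nondecreasing_cvgn_le nd (is_cvg_expsum ga) m.+1).
rewrite /expsum big_nat_recr //= -[X in X < _]add0r.
apply: ler_ltD; first exact: sumr_ge0.
by rewrite mulr_gt0 ?divr_gt0 ?exprn_gt0 ?ltr0n ?fact_gt0.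
Qed.

End ExponentialSeries.

Section RowAction.
Variables (R : realType) (T : finType).

Definition rowact (k : T -> T -> R) (p : T -> R) (y : T) : R := \sum_x p x * k x y.

Definition l1norm (p : T -> R) : R := \sum_x `|p x|.

Lemma le_l1norm p x : `|p x| <= l1norm p.
Proof. by rewrite /l1norm (bigD1 x) //= lerDl sumr_ge0. Qed.

Lemma l1norm_rowact k p :
  l1norm (rowact k p) <= (\sum_x \sum_y `|k x y|) * l1norm p.
Proof.
apply: (@le_trans _ _ (\sum_y \sum_x l1norm p * `|k x y|)).
  apply: ler_sum => y _; apply: le_trans (ler_norm_sum _ _ _) _.
  by apply: ler_sum => x _; rewrite normrM ler_wpM2r // le_l1norm.
rewrite exchange_big /= mulrC mulr_sumr; apply: ler_sum => x _.
by rewrite mulr_sumr.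
Qed.

Lemma geom_bounded_iter_rowact k p y : geom_bounded (fun n => iter n (rowact k) p y).
Proof.
set K := \sum_x \sum_y `|k x y|.
have K_ge0 : 0 <= K by apply/sumr_ge0 => x _; apply/sumr_ge0.
have l1_iter n : l1norm (iter n (rowact k) p) <= l1norm p * K ^+ n.
  elim: n => [|n IHn] /=; first by rewrite mulr1.
  apply: le_trans (l1norm_rowact _ _) _.
  by rewrite exprS mulrCA ler_wpM2l.
by exists (l1norm p), K; split=> // n; apply: le_trans (le_l1norm _ _) (l1_iter n).
Qed.

Definition rowexp (k : T -> T -> R) (p : T -> R) (t : R) (y : T) : R :=
  expser (fun n => iter n (rowact k) p y) t.

Lemma is_derive_rowexp k p (t : R) y :
  is_derive t 1 (rowexp k p ^~ y) (rowact k (rowexp k p t) y).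
Proof.
have -> : rowact k (rowexp k p t) y = expser (fun n => iter n.+1 (rowact k) p y) t.
  have -> : (fun n => iter n.+1 (rowact k) p y) =
      fun n => \sum_x k x y * iter n (rowact k) p x.
    by apply/funext => n; rewrite iterS; apply: eq_bigr => x _; rewrite mulrC.
  rewrite expser_sum => [|x]; last exact/geom_boundedZ/geom_bounded_iter_rowact.
  apply: eq_bigr => x _; rewrite expserZ 1?mulrC //.
  exact: geom_bounded_iter_rowact.
exact/is_derive_expser/geom_bounded_iter_rowact.
Qed.

Lemma rowexp0 k p y : rowexp k p 0 y = p y.
Proof. exact: expser0. Qed.

Lemma rowactZ k c p y : rowact k (fun x => c * p x) y = c * rowact k p y.
Proof. by rewrite /rowact mulr_sumr; apply: eq_bigr => x _; rewrite mulrA. Qed.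

Lemma rowactB k p p' y :
  rowact k (fun x => p x - p' x) y = rowact k p y - rowact k p' y.
Proof. by rewrite /rowact -sumrB; apply: eq_bigr => x _; rewrite mulrBl. Qed.

End RowAction.

Lemma le_of_ler0_derive1 (R : realType) (f : R -> R) (a b : R) :
  (forall x, a <= x <= b -> derivable f x 1) ->
  (forall x, a < x < b -> derive1 f x <= 0) -> a <= b -> f b <= f a.
Proof.
move=> df df_le0 ab.
have df_oo x : x \in `]a, b[ -> derivable f x 1.
  by rewrite in_itv /= => /andP[ax xb]; apply: df; rewrite !ltW.
have df_le0_oo x : x \in `]a, b[ -> derive1 f x <= 0 by rewrite in_itv; exact: df_le0.
apply: (ler0_derive1_le_cc df_oo df_le0_oo); rewrite ?in_itv /= ?lexx ?ab //.
by apply: derivable_within_continuous => x; rewrite in_itv /=; exact: df.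
Qed.

Lemma is_derive_sumr (R : realType) (I : Type) (r : seq I) (f : I -> R -> R)
    (df : I -> R) (t : R) :
  (forall i, is_derive t 1 (f i) (df i)) ->
  is_derive t 1 (fun s => \sum_(i <- r) f i s) (\sum_(i <- r) df i).
Proof.
move=> fdf; elim: r => [|i r IHr].
  under eq_fun do rewrite big_nil; rewrite big_nil; exact: is_derive_cst.
under eq_fun do rewrite big_cons; rewrite big_cons; exact: is_deriveD.
Qed.

Section NoisingLaw.
Variables (R : realType) (S d : nat).
Hypothesis S_gt0 : (0 < S)%N.
Local Notation state := (state S d).

Definition avgkern (x y : state) : R := \sum_(j < d) S%:R^-1 * (agree_off j y x)%:R.

Lemma rowact_avgkern (p : state -> R) y :
  rowact avgkern p y = \sum_(j < d) cavg j p y.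
Proof.
rewrite /rowact; under eq_bigr do rewrite mulr_sumr.
rewrite exchange_big; apply: eq_bigr => j _ /=.
rewrite /cavg -sum_agree_off mulr_sumr [RHS]big_mkcond; apply: eq_bigr => x _.
by case: agree_off; rewrite ?mulr1 ?mulr0 // mulrC.
Qed.

Lemma genact_avgkern (p : state -> R) y :
  genact p y = rowact avgkern p y - d%:R * p y.
Proof.
by rewrite genactE // sumrB rowact_avgkern sumr_const card_ord mulr_natl.
Qed.

Definition agree_from (k : nat) (y z : state) : bool :=
  [forall j : 'I_d, (k <= j)%N ==> (y j == z j)].

Lemma agree_from_upd k (k_lt_d : (k < d)%N) y a z :
  agree_from k (upd y (Ordinal k_lt_d) a) z =
  agree_from k.+1 y z && (z (Ordinal k_lt_d) == a).
Proof.
set jk := Ordinal k_lt_d.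
apply/forallP/andP => [H|[/forallP H /eqP za] j].
  split; last by have := H jk; rewrite ffunE eqxx leqnn eq_sym.
  apply/forallP => j; apply/implyP => kj; have := H j; rewrite ffunE.
  have -> : (j == jk) = false by apply: contraTF kj => /eqP ->; rewrite ltnn.
  by rewrite (ltnW kj).
apply/implyP => kj; rewrite ffunE; have [->|jk_neq] := eqVneq j jk; first by rewrite za.
apply: implyP (H j) _; rewrite ltn_neqAle kj andbT.
by apply: contra jk_neq => /eqP jkE; apply/eqP/val_inj.
Qed.

Section Positivity.
Variable q0 : state -> R.
Hypothesis q0_ge0 : forall x, 0 <= q0 x.
Hypothesis q0_sum1 : \sum_x q0 x = 1.

Lemma iter_avgkern_ge0 n y : 0 <= iter n (rowact avgkern) q0 y.
Proof.
elim: n y => [|n IHn] y /=; first exact: q0_ge0.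
by rewrite rowact_avgkern sumr_ge0 // => j _; rewrite mulr_ge0 ?sumr_ge0.
Qed.

Lemma iter_avgkern_lb k : (k <= d)%N -> forall y,
  S%:R^-1 ^+ k * \sum_(z | agree_from k y z) q0 z <= iter k (rowact avgkern) q0 y.
Proof.
elim: k => [|k IHk] k_le_d y.
  rewrite expr0 mul1r /= (big_pred1 y) // => z /=.
  apply/forallP/eqP => [H|<- j]; last by rewrite implyTb.
  by apply/ffunP => j; move/implyP: (H j) => /(_ isT) /eqP.
set jk := Ordinal k_le_d.
rewrite iterS rowact_avgkern (bigD1 jk) //= -[X in X <= _]addr0.
apply: lerD; last by apply: sumr_ge0 => j _; rewrite mulr_ge0 ?sumr_ge0 // => *;
  exact: iter_avgkern_ge0.
rewrite /cavg exprS -mulrA ler_wpM2l //.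
apply: le_trans (ler_sum _ (fun a _ => IHk (ltnW k_le_d) (upd y jk a))).
rewrite -mulr_sumr ler_wpM2l ?exprn_ge0 //.
under [X in _ <= X]eq_bigr => a _ do under eq_bigl => z do rewrite agree_from_upd.
by rewrite (partition_big (fun z : state => z jk) xpredT).
Qed.

Lemma rowexp_avgkern_gt0 t y : 0 < t -> 0 < rowexp avgkern q0 t y.
Proof.
move=> t_gt0; apply: (expser_gt0 (m := d)) => //.
- exact: geom_bounded_iter_rowact.
- by move=> n; apply: iter_avgkern_ge0.
apply: lt_le_trans (iter_avgkern_lb (leqnn d) y).
have -> : \sum_(z | agree_from d y z) q0 z = 1.
  by rewrite -q0_sum1; apply: eq_bigl => z; apply/forallP => j; rewrite leqNgt ltn_ord.
by rewrite mulr1 exprn_gt0 // invr_gt0 ltr0n.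
Qed.

End Positivity.

Lemma sum_mul_genact_le0 (u : state -> R) : \sum_y u y * genact u y <= 0.
Proof.
under eq_bigr do rewrite genactE // mulr_sumr.
rewrite exchange_big /=; apply: sumr_le0 => j _; exact: sum_mul_sub_cavg_le0.
Qed.

(* The energy [\sum_y u_t(y)^2] of a solution of [u' = u Q] does not increase. *)
Lemma genact_flow_eq0 (u : R -> state -> R) (t : R) :
  (forall (s : R) y, is_derive s 1 (u ^~ y) (genact (u s) y)) ->
  (forall y, u 0 y = 0) -> 0 <= t -> forall y, u t y = 0.
Proof.
move=> du u0 t_ge0 y.
pose energy s := \sum_y u s y ^+ 2.
have denergy (s : R) : is_derive s 1 energy (2 * \sum_y u s y * genact (u s) y).
  apply: is_derive_eq; first by apply: is_derive_sumr => z; apply: is_deriveX.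
  by rewrite mulr_sumr; apply: eq_bigr => z _; rewrite mulr2n mulrDl mul1r.
have energy_t : energy t <= energy 0.
  apply: (le_of_ler0_derive1 _ _ t_ge0) => s _; first by case: (denergy s).
  by rewrite derive1E; have [_ ->] := denergy s; rewrite pmulr_rle0 // sum_mul_genact_le0.
have : energy t == 0.
  rewrite eq_le sumr_ge0 ?andbT => [|z _]; last exact: sqr_ge0.
  by apply: le_trans energy_t _; rewrite /energy big1 // => z _; rewrite u0 expr0n.
move/eqP/psumr_eq0P => /(_ (fun z _ => sqr_ge0 (u t z)) y isT) /eqP.
by rewrite sqrf_eq0 => /eqP.
Qed.

Lemma qtE (q0 : state -> R) t y : qt q0 t y = rowexp (@ugen R S d) q0 t y.
Proof. by []. Qed.

Lemma is_derive_qt (q0 : state -> R) (t : R) y :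
  is_derive t 1 (qt q0 ^~ y) (genact (qt q0 t) y).
Proof. exact: is_derive_rowexp. Qed.

(* [Q = M - d] with [M] the averaging kernel, so [q_t = e^{-dt} q_0 e^{tM}]. *)
Lemma qt_rowexp_avgkern (q0 : state -> R) t y : 0 <= t ->
  qt q0 t y = expR (- d%:R * t) * rowexp avgkern q0 t y.
Proof.
pose v s y := expR (- d%:R * s) * rowexp avgkern q0 s y.
have dv (s : R) z : is_derive s 1 (v ^~ z) (genact (v s) z).
  have dlin : is_derive s 1 (fun r : R => - d%:R * r) (- d%:R).
    by have := is_deriveZ (- d%:R) (is_derive_id s (1 : R)); rewrite /GRing.scale /= mulr1.
  have dexp : is_derive s 1 (fun r => expR (- d%:R * r)) (expR (- d%:R * s) * - d%:R).
    exact: is_derive1_comp.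
  apply: is_derive_eq; first exact: is_deriveM dexp (is_derive_rowexp _ _ _ _).
  rewrite genact_avgkern // /v rowactZ /GRing.scale /=; ring.
move=> t_ge0; apply: subr0_eq; move: y.
apply: (genact_flow_eq0 (u := fun s y => qt q0 s y - v s y) _ _ t_ge0) => [s z|z].
  apply: is_derive_eq; first exact: (is_deriveB (is_derive_qt q0 s z) (dv s z)).
  exact: esym (rowactB (@ugen R S d) _ _ _).
by rewrite /v qtE !rowexp0 mulr0 expR0 mul1r subrr.
Qed.

Lemma qt_gt0 (q0 : state -> R) t y : (forall x, 0 <= q0 x) -> \sum_x q0 x = 1 ->
  0 < t -> 0 < qt q0 t y.
Proof.
move=> q0_ge0 q0_sum1 t_gt0; rewrite qt_rowexp_avgkern ?ltW //.
by rewrite mulr_gt0 ?expR_gt0 ?rowexp_avgkern_gt0.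
Qed.

End NoisingLaw.

Section LogInequalities.
Variable R : realType.

Lemma ln_le_subr1 (y : R) : 0 < y -> ln y <= y - 1.
Proof.
by move=> y_gt0; have := @le_ln1Dx R (y - 1); rewrite addrCA subrr addr0; apply; lra.
Qed.

Lemma oppr_ln_le (y : R) : 0 < y -> - ln y <= y^-1 - 1.
Proof. by move=> y_gt0; rewrite -lnV ?posrE // ln_le_subr1 // invr_gt0. Qed.

(* The gap is [a (ln u + 1/u - 1)] with [u = r/p]. *)
Lemma ln_ineq_same_coord (p r a : R) : 0 < p -> 0 < r -> 0 < a ->
  p * - ln (r / p) + (a - p) <= (a - p) * ln (r / p) + p * (a - r) / r.
Proof.
move=> p_gt0 r_gt0 a_gt0; set u := r / p.
have u_gt0 : 0 < u by rewrite divr_gt0.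
rewrite -subr_ge0; have := oppr_ln_le u_gt0.
have -> : (a - p) * ln u + p * (a - r) / r - (p * - ln u + (a - p)) =
          a * (ln u + u^-1 - 1).
  by rewrite /u invf_div; field; rewrite gt_eqF.
move=> ln_u; apply: mulr_ge0; [exact: ltW | lra].
Qed.

(* With [X = (r/p * a/b)^-1] the gap is [p (ln X + 1/X - 1) + a (X - 1 - ln X)]. *)
Lemma ln_ineq_other_coord (p r a b : R) : 0 < p -> 0 < r -> 0 < a -> 0 < b ->
  ln (a / b) * (p - a) - a / b * (r - b) <= (a - p) * ln (r / p) + p * (b - r) / r.
Proof.
move=> p_gt0 r_gt0 a_gt0 b_gt0; set X := (r / p * (a / b))^-1.
have X_gt0 : 0 < X by rewrite invr_gt0 !mulr_gt0 ?invr_gt0.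
have lnX : ln X = - (ln (r / p) + ln (a / b)).
  by rewrite lnV ?lnM ?posrE ?mulr_gt0 ?invr_gt0.
rewrite -subr_ge0; have := ln_le_subr1 X_gt0; have := oppr_ln_le X_gt0.
have -> : (a - p) * ln (r / p) + p * (b - r) / r -
          (ln (a / b) * (p - a) - a / b * (r - b)) =
          p * (ln X + X^-1 - 1) + a * (X - 1 - ln X).
  by rewrite lnX /X invrK; field; rewrite !gt_eqF.
by move=> ln1 ln2; apply: addr_ge0; apply: mulr_ge0; (exact: ltW || lra).
Qed.

End LogInequalities.

Section Shift.
Variables (R : realType) (S d : nat).
Local Notation state := (state S d).

Lemma shiftS_inj c : injective (@shiftS S c).
Proof.
move=> j j' /(congr1 val) /= /eqP; rewrite eqn_modDr !modn_small //.
by move/eqP => E; apply: val_inj.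
Qed.

Lemma oplus_inj i c : injective (fun x : state => oplus x i c).
Proof.
move=> x y /= /ffunP xy; apply/ffunP => k; have := xy k; rewrite !ffunE.
by case: eqP => // _; apply: shiftS_inj.
Qed.

Lemma sum_oplus (F : state -> R) i c : \sum_x F (oplus x i c) = \sum_x F x.
Proof. by rewrite [RHS](reindex_inj (@oplus_inj i c)). Qed.

Lemma upd_oplus (x : state) i c j a : j != i ->
  upd (oplus x i c) j a = oplus (upd x j a) i c.
Proof.
move=> ji; apply/ffunP => k; rewrite !ffunE.
by have [->|//] := eqVneq k j; rewrite (negbTE ji).
Qed.

Lemma upd_oplus_same (x : state) i c a : upd (oplus x i c) i a = upd x i a.
Proof. by apply/ffunP => k; rewrite !ffunE; case: eqP. Qed.

Lemma oplus_upd_same (x : state) i c a : oplus (upd x i a) i c = upd x i (shiftS c a).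
Proof. by apply/ffunP => k; rewrite !ffunE; case: eqP => // ->; rewrite ffunE eqxx. Qed.

Lemma cavg_oplus j (p : state -> R) x i c :
  cavg j p (oplus x i c) = cavg j (fun z => p (oplus z i c)) x.
Proof.
rewrite /cavg; congr (_ * _); have [->|ji] := eqVneq j i.
  under eq_bigr do rewrite upd_oplus_same.
  under [RHS]eq_bigr do rewrite oplus_upd_same.
  by rewrite [LHS](reindex_inj (@shiftS_inj c)).
by apply: eq_bigr => a _; rewrite upd_oplus.
Qed.

Lemma cavg_oplus_same (p : state -> R) x i c :
  cavg i (fun z => p (oplus z i c)) x = cavg i p x.
Proof. by rewrite -cavg_oplus /cavg; under eq_bigr do rewrite upd_oplus_same. Qed.

End Shift.

Section ScoreEntropy.
Variables (R : realType) (S d : nat).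
Hypothesis S_gt0 : (0 < S)%N.
Local Notation state := (state S d).
Variable q0 : state -> R.
Hypothesis q0_ge0 : forall x, 0 <= q0 x.
Hypothesis q0_sum1 : \sum_x q0 x = 1.
Variables (i : 'I_d) (c : nat).
Local Notation "x '⊕'" := (oplus x i c) (at level 2, format "x '⊕'").

Let q_gt0 t : 0 < t -> forall x, 0 < qt q0 t x.
Proof. by move=> t_gt0 x; apply: qt_gt0. Qed.

Definition dphi_ic (t : R) (x : state) : R :=
  genact (qt q0 t) x - qt q0 t x * genact (qt q0 t) x⊕ / qt q0 t x⊕
  - genact (qt q0 t) x * ln (qt q0 t x⊕ / qt q0 t x).

Lemma is_derive_phi_ic (t : R) : 0 < t ->
  is_derive t 1 (phi_ic q0 i c) (\sum_x dphi_ic t x).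
Proof.
move=> t_gt0; apply: is_derive_sumr => x.
have p_gt0 := q_gt0 t_gt0 x; have r_gt0 := q_gt0 t_gt0 x⊕.
have dratio := is_deriveM (is_derive_qt q0 t x⊕)
  (is_deriveV (lt0r_neq0 p_gt0) (is_derive_qt q0 t x)).
have dln := @is_derive1_comp _ (@ln R) (fun s => qt q0 s x⊕ / qt q0 s x) t _ _
  (is_derive1_ln (divr_gt0 r_gt0 p_gt0)) dratio.
apply: is_derive_eq; first exact: is_deriveM (is_derive_qt q0 t x) (is_deriveN dln).
by rewrite /dphi_ic /GRing.scale /= !fctE /=; field; rewrite !gt_eqF.
Qed.

Lemma phi_ic_ge0 (t : R) : 0 < t -> 0 <= phi_ic q0 i c t.
Proof.
move=> t_gt0; set p := qt q0 t.
have <- : \sum_x (p x - p x⊕) = 0 by rewrite sumrB (sum_oplus p) subrr.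
apply: ler_sum => x _; rewrite /score -/p.
have p_gt0 := q_gt0 t_gt0 x; have r_gt0 := q_gt0 t_gt0 x⊕.
have := ln_le_subr1 (divr_gt0 r_gt0 p_gt0).
have -> : p x - p x⊕ = p x * (1 - p x⊕ / p x) by field; rewrite gt_eqF.
by move=> ln_le; rewrite ler_pM2l // lerNr opprB.
Qed.

Definition coord_term (t : R) (j : 'I_d) (x : state) : R :=
  let p := qt q0 t in
  (cavg j p x - p x) * ln (p x⊕ / p x) +
  p x * (cavg j (fun z => p z⊕) x - p x⊕) / p x⊕.

Lemma oppr_sum_dphi_icE (t : R) :
  - \sum_x dphi_ic t x = \sum_(j < d) \sum_x coord_term t j x.
Proof.
set p := qt q0 t; rewrite exchange_big /=.
have dphiE x : - dphi_ic t x = \sum_(j < d) coord_term t j x - genact p x.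
  rewrite /coord_term -/p big_split /= -!mulr_suml -mulr_sumr.
  have -> : \sum_(j < d) (cavg j (fun z => p z⊕) x - p x⊕) = genact p x⊕.
    by rewrite genactE //; apply: eq_bigr => j _; rewrite cavg_oplus.
  by rewrite -genactE // /dphi_ic -/p; ring.
by rewrite -sumrN (eq_bigr _ (fun x _ => dphiE x)) sumrB sum_genact ?subr0.
Qed.

Lemma phi_ic_le_coord_term (t : R) : 0 < t ->
  phi_ic q0 i c t <= \sum_x coord_term t i x.
Proof.
move=> t_gt0; set p := qt q0 t; have p_gt0 := q_gt0 t_gt0.
have -> : phi_ic q0 i c t = \sum_x (p x * - ln (p x⊕ / p x) + (cavg i p x - p x)).
  by rewrite big_split /= sumrB sum_cavg ?subrr ?addr0.
apply: ler_sum => x _; rewrite /coord_term -/p cavg_oplus_same.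
exact: ln_ineq_same_coord (p_gt0 x) (p_gt0 x⊕) (cavg_gt0 _ _ _ p_gt0).
Qed.

Lemma sum_coord_term_ge0 (t : R) j : 0 < t -> 0 <= \sum_x coord_term t j x.
Proof.
move=> t_gt0; set p := qt q0 t; set r := fun z => p z⊕.
have p_gt0 := q_gt0 t_gt0; have r_gt0 z : 0 < r z by apply: p_gt0.
pose a x := cavg j p x; pose b x := cavg j r x.
pose G x := ln (a x / b x) * (p x - a x) - a x / b x * (r x - b x).
have G0 : \sum_x G x = 0.
  by rewrite sumrB !sum_mul_sub_cavg ?subrr // => x a'; rewrite /a /b !cavg_upd.
rewrite -{1}G0; apply: ler_sum => x _.
exact: ln_ineq_other_coord (p_gt0 x) (r_gt0 x) (cavg_gt0 _ _ _ p_gt0)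
  (cavg_gt0 _ _ _ r_gt0).
Qed.

Lemma phi_ic_le_oppr_derive (t : R) : 0 < t ->
  phi_ic q0 i c t <= - \sum_x dphi_ic t x.
Proof.
move=> t_gt0; rewrite oppr_sum_dphi_icE (bigD1 i) //= -[X in X <= _]addr0.
apply: lerD; first exact: phi_ic_le_coord_term.
by apply: sumr_ge0 => j _; apply: sum_coord_term_ge0.
Qed.

End ScoreEntropy.

Section Phi.
Variables (R : realType) (S d : nat).
Hypothesis S_gt0 : (0 < S)%N.
Variable q0 : state S d -> R.
Hypothesis q0_ge0 : forall x, 0 <= q0 x.
Hypothesis q0_sum1 : \sum_x q0 x = 1.

Definition dphi (t : R) : R :=
  S%:R^-1 * \sum_(i < d) \sum_(1 <= c < S.+1) \sum_x dphi_ic q0 i c t x.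

Lemma is_derive_phi (t : R) : 0 < t -> is_derive t 1 (phi q0) (dphi t).
Proof.
move=> t_gt0; apply: is_deriveZ; apply: is_derive_sumr => i.
by apply: is_derive_sumr => c; apply: is_derive_phi_ic.
Qed.

Lemma phi_ic_le_oppr_derive1 i c (t : R) : 0 < t ->
  derivable (phi_ic q0 i c) t 1 /\ phi_ic q0 i c t <= - derive1 (phi_ic q0 i c) t.
Proof.
move=> t_gt0; have [? dphiE] := is_derive_phi_ic S_gt0 q0_ge0 q0_sum1 i c t_gt0.
by split=> //; rewrite derive1E dphiE phi_ic_le_oppr_derive.
Qed.

Lemma phi_le_oppr_derive1 (t : R) : 0 < t ->
  derivable (phi q0) t 1 /\ phi q0 t <= - derive1 (phi q0) t /\ 0 <= phi q0 t.
Proof.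
move=> t_gt0; have [? dphiE] := is_derive_phi t_gt0.
split=> //; rewrite derive1E dphiE /dphi /phi -mulrN; split.
  rewrite ler_wpM2l ?invr_ge0 // -sumrN ler_sum // => i _.
  by rewrite -sumrN ler_sum // => c _; apply: phi_ic_le_oppr_derive.
by rewrite mulr_ge0 ?invr_ge0 ?sumr_ge0 // => i _; rewrite sumr_ge0 // => c _;
   apply: phi_ic_ge0.
Qed.

Lemma phi_nonincreasing (s t : R) : 0 < s -> s <= t -> phi q0 t <= phi q0 s.
Proof.
move=> s_gt0 s_le_t; apply: le_of_ler0_derive1 s_le_t => x /andP[sx _].
  by have [] := phi_le_oppr_derive1 (lt_le_trans s_gt0 sx).
have [_ [phi_le phi_ge0]] := phi_le_oppr_derive1 (lt_trans s_gt0 sx); lra.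
Qed.

End Phi.

Theorem mainTheorem17 (R : realType) (S d : nat) (q0 : state S d -> R) :
  (0 < S)%N ->
  (forall x, 0 <= q0 x) -> \sum_(x : state S d) q0 x = 1 ->
  (forall (i : 'I_d) (c : nat), (1 <= c <= S)%N ->
     forall t : R, 0 < t ->
       derivable (phi_ic q0 i c) t 1 /\
       phi_ic q0 i c t <= - derive1 (phi_ic q0 i c) t) /\
  (forall t : R, 0 < t ->
     derivable (phi q0) t 1 /\
     phi q0 t <= - derive1 (phi q0) t /\ 0 <= phi q0 t) /\
  (forall s t : R, 0 < s -> s <= t -> phi q0 t <= phi q0 s).
Proof.
(* [x ⊕_i c] only depends on [c mod S]. *)
move=> S_gt0 q0_ge0 q0_sum1; split; last split.
- by move=> i c _ t; apply: phi_ic_le_oppr_derive1.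
- by move=> t; apply: phi_le_oppr_derive1.
- by move=> s t; apply: phi_nonincreasing.
Qed.
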